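(* Let $p$ be an odd prime, $K$ an algebraically closed field of characteristic $\ne p$, $G=\mathrm{PGL}_n(K)$, $n=p^st$ with $\gcd(p,t)=1$, $s,t\ge1$. Let $1\le r\le s$, $n=p^rk$, and $D=D_r\times(H\otimes I_{p^r})$ where $H$ is trivial or a toral elementary abelian $p$-subgroup of $\mathrm{PGL}_k(K)$ with connected centralizer in $\mathrm{PGL}_k(K)$. Then $C_G(D)=\langle C_G(D)^\circ,\bar B_0,\dots,\bar B_{r-1}\rangle=C_G(D)^\circ\cdot B_r$.
   Context: Fix a primitive $p$-th root of unity $\beta\in K$. For $0\le s'\le r-1$: $\sigma_{s'}$ is the permutation of $\{1,\dots,p^r\}$ with $\sigma_{s'}(i)=i+p^{s'}$ if $i\equiv1,\dots,(p-1)p^{s'}\pmod{p^{s'+1}}$ and $\sigma_{s'}(i)=i-(p-1)p^{s'}$ otherwise (residues in $\{1,\dots,p^{s'+1}\}$); $A_{s'}$ is diagonal $p^r\times p^r$ with $(A_{s'})_{ii}=\beta^{\lfloor(i-1)/p^{s'}\rfloor}$; $B_{s'}$ is the permutation matrix with $(B_{s'})_{ij}=1$ iff $\sigma_{s'}(i)=j$. $\bar A_{s'},\bar B_{s'}$ are the images in $\mathrm{PGL}_n(K)$ of $I_k\otimes A_{s'}$, $I_k\otimes B_{s'}$. $D_r=\langle\bar A_0,\dots,\bar A_{r-1}\rangle$, $B_r=\langle\bar B_0,\dots,\bar B_{r-1}\rangle$. $H\otimes I_{p^r}$ is the image of $\{h\otimes I_{p^r}\}$. Toral: in a maximal torus.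 *)

From HB Require Import structures.
From mathcomp Require Import all_boot all_order all_algebra.
From mathcomp Require Import mpoly.
Set Implicit Arguments. Unset Strict Implicit. Unset Printing Implicit Defensive.
Import Order.TTheory GRing.Theory.
Local Open Scope ring_scope.

Section PGL.
Variable K : fieldType.

Definition mxn {m n'} (A : 'M[K]_(m, n')) (a b : nat) : K :=
  match @insub _ (fun x => x < m)%N 'I_m a, @insub _ (fun x => x < n')%N 'I_n' b with
  | Some i, Some j => A i j
  | _, _ => 0
  end.

(* Kronecker product A (x) B, row index a*q+b *)
Definition kron {m q} (A : 'M[K]_m) (B : 'M[K]_q) : 'M[K]_(m * q) :=
  \matrix_(i, j) (mxn A (i %/ q) (j %/ q) * mxn B (i %% q) (j %% q)).

Variable m : nat.

(* Subsets of PGL_m(K) are represented by their (scalar-saturated) preimages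
   in GL_m(K), i.e. predicates on invertible matrices. *)
Definition saturated (F : 'M[K]_m -> Prop) :=
  forall A c, A \in unitmx -> c != 0 -> F A -> F (c *: A).

Definition is_scalar_unit (A : 'M[K]_m) := exists c : K, c != 0 /\ A = c%:M.

Definition GLsubgroup (H : 'M[K]_m -> Prop) :=
  [/\ H 1%:M, (forall A B, H A -> H B -> H (A *m B))
    & (forall A, H A -> A \in unitmx /\ H (invmx A))].

Definition gen (S : 'M[K]_m -> Prop) (X : 'M[K]_m) :=
  forall H, GLsubgroup H -> (forall Y, S Y -> H Y) -> H X.

(* preimage in GL_m of the subgroup of PGL_m generated by the images of S *)
Definition pgen (S : 'M[K]_m -> Prop) :=
  gen (fun X => S X \/ is_scalar_unit X).

(* preimage of the centralizer in PGL_m of the image of S *)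
Definition pcent (S : 'M[K]_m -> Prop) (X : 'M[K]_m) :=
  X \in unitmx /\ forall d, S d -> exists c : K, c != 0 /\ X *m d = c *: (d *m X).

Definition Zclosed (F : 'M[K]_m -> Prop) :=
  exists S : {mpoly K[m * m]} -> Prop, forall A, A \in unitmx ->
    (F A <-> forall q, S q -> q.@[fun i => mxvec A 0 i] = 0).

(* closed subsets of PGL_m (quotient topology) *)
Definition PZclosed F := Zclosed F /\ saturated F.

Definition Pconnected (Z : 'M[K]_m -> Prop) :=
  forall F1 F2, PZclosed F1 -> PZclosed F2 ->
    (forall A, Z A -> F1 A \/ F2 A) -> (forall A, Z A -> F1 A -> F2 A -> False) ->
    (forall A, Z A -> F1 A) \/ (forall A, Z A -> F2 A).

Definition idcomp (Y : 'M[K]_m -> Prop) (X : 'M[K]_m) :=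
  exists Z : 'M[K]_m -> Prop, [/\ (forall A, Z A -> Y A), saturated Z, Z 1%:M,
    Pconnected Z & Z X].

Definition PGLsubgroup (H : 'M[K]_m -> Prop) := GLsubgroup H /\ saturated H.

Definition trivialP (H : 'M[K]_m -> Prop) := forall A, H A <-> is_scalar_unit A.

Definition toral_elab_psubgroup (p : nat) (H : 'M[K]_m -> Prop) :=
  [/\ PGLsubgroup H,
      (forall A B, H A -> H B -> exists c : K, c != 0 /\ A *m B = c *: (B *m A)),
      (forall A, H A -> is_scalar_unit (iter p (mulmx A) 1%:M)) &
      (* toral: contained in a maximal torus (conjugate of the diagonal torus) *)
      (exists x, x \in unitmx /\ forall A, H A -> is_diag_mx (x *m A *m invmx x))].

Definition connected_centralizer (H : 'M[K]_m -> Prop) :=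
  forall X, pcent H X -> idcomp (pcent H) X.

End PGL.

(* sigma_{s'} on 0-based indices {0,...,p^r-1} *)
Definition sigma (p s' i : nat) : nat :=
  if (i %% p ^ s'.+1 < (p - 1) * p ^ s')%N then (i + p ^ s')%N
  else (i - (p - 1) * p ^ s')%N.

Definition Amat (K : fieldType) (p r : nat) (beta : K) (s' : nat) : 'M[K]_(p ^ r) :=
  \matrix_(i, j) (if i == j then beta ^+ (i %/ p ^ s') else 0).

Definition Bmat (K : fieldType) (p r s' : nat) : 'M[K]_(p ^ r) :=
  \matrix_(i, j) ((sigma p s' i == j)%:R).

(* Every X in the centralizer C twists each generator of D by a p-th root of
   unity.  As B_s' twists A_s' by beta and commutes with the other A's, X b
   commutes with every A_s' for a suitable word b in the B's.  Such a matrix Y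
   is block diagonal for I_k (x) I_p^r, and a diagonal block of Y centralizes H
   in PGL_k.  On a connected set through 1, the scalar by which an element
   twists h in H is constant (being 1 or not are disjoint closed conditions),
   so connectedness of the centralizer of H forces Y to commute with H exactly.
   Then the line through 1 and Y lies in C, hence Y lies in C°, and
   X = Y b^-1 is in C°.B_r. *)

From HB Require Import structures.
From mathcomp Require Import all_boot all_order all_algebra.
From mathcomp Require Import mpoly mxtens perm zify.
From Stdlib Require Import Classical.
Import GRing.Theory.
Local Open Scope ring_scope.
Set Implicit Arguments. Unset Strict Implicit. Unset Printing Implicit Defensive.

Section Kronecker.
Variable K : fieldType.

Lemma mxnE m n (A : 'M[K]_(m, n)) a b (ha : (a < m)%N) (hb : (b < n)%N) :
  mxn A a b = A (Ordinal ha) (Ordinal hb).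
Proof. by rewrite /mxn !insubT. Qed.

Lemma kron_tensmx m q (A : 'M[K]_m) (B : 'M[K]_q) : kron A B = A *t B.
Proof.
apply/matrixP => i j; rewrite !mxE.
rewrite (mxnE A (mxtens_index_proof1 i) (mxtens_index_proof1 j)).
by rewrite (mxnE B (mxtens_index_proof2 i) (mxtens_index_proof2 j)).
Qed.

Lemma mul_kron m q (A C : 'M[K]_m) (B D : 'M[K]_q) :
  kron A B *m kron C D = kron (A *m C) (B *m D).
Proof. by rewrite !kron_tensmx tensmx_mul. Qed.

Lemma kron1 m q : kron (1%:M : 'M[K]_m) (1%:M : 'M[K]_q) = 1%:M.
Proof.
rewrite kron_tensmx; apply/matrixP => i j.
case: (mxtens_indexP i) => a b; case: (mxtens_indexP j) => a' b'.
rewrite tensmxE !mxE -natrM mulnb; congr (_%:R).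
by rewrite (inj_eq (can_inj (@mxtens_indexK m q))) xpair_eqE.
Qed.

Lemma kronZl m q c (A : 'M[K]_m) (B : 'M[K]_q) : kron (c *: A) B = c *: kron A B.
Proof. by rewrite !kron_tensmx; apply/matrixP => i j; rewrite !mxE mulrA. Qed.

Lemma kronZr m q c (A : 'M[K]_m) (B : 'M[K]_q) : kron A (c *: B) = c *: kron A B.
Proof. by rewrite !kron_tensmx; apply/matrixP => i j; rewrite !mxE mulrCA. Qed.

Lemma kron_unitmx m q (A : 'M[K]_m) (B : 'M[K]_q) :
  A \in unitmx -> B \in unitmx -> kron A B \in unitmx.
Proof.
move=> uA uB; suff : kron A B *m kron (invmx A) (invmx B) = 1%:M by case/mulmx1_unit.
by rewrite mul_kron !mulmxV // kron1.
Qed.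

End Kronecker.

Section MatrixPowers.
Variables (K : fieldType) (m : nat).
Implicit Types (A M X : 'M[K]_m).

Definition mxpow M j := iter j (mulmx M) 1%:M.

Lemma mxpowS M j : mxpow M j.+1 = M *m mxpow M j. Proof. by []. Qed.

Lemma mxpowD M i j : mxpow M i *m mxpow M j = mxpow M (i + j).
Proof. by elim: i => [|i IH]; rewrite ?mul1mx // addSn mxpowS -mulmxA IH. Qed.

Lemma mxpow_unit M j : M \in unitmx -> mxpow M j \in unitmx.
Proof. by move=> uM; elim: j => [|j IH]; rewrite ?unitmx1 // mxpowS unitmx_mul uM. Qed.

Lemma mulmx_mxpow_commZ X M c j : X *m M = c *: (M *m X) ->
  X *m mxpow M j = c ^+ j *: (mxpow M j *m X).
Proof.
move=> XM; elim: j => [|j IH]; first by rewrite mulmx1 mul1mx scale1r.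
rewrite mxpowS mulmxA XM -scalemxAl -mulmxA IH -scalemxAr scalerA mulmxA.
by rewrite exprS.
Qed.

Lemma mxpow_mulmx_commZ M A c j : M *m A = c *: (A *m M) ->
  mxpow M j *m A = c ^+ j *: (A *m mxpow M j).
Proof.
move=> MA; elim: j => [|j IH]; first by rewrite mulmx1 mul1mx scale1r.
rewrite mxpowS -mulmxA IH -scalemxAr !mulmxA MA -scalemxAl scalerA.
by rewrite exprSr.
Qed.

Lemma mxpow_diag (d : 'rV[K]_m) j : mxpow (diag_mx d) j = diag_mx (\row_i d 0 i ^+ j).
Proof.
elim: j => [|j IH]; last first.
  by rewrite mxpowS IH mulmx_diag; congr diag_mx; apply/rowP => i; rewrite !mxE exprS.
by rewrite /= -diag_const_mx; congr diag_mx; apply/rowP => i; rewrite !mxE.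
Qed.

End MatrixPowers.

Lemma mxpow_kron1 (K : fieldType) m q (M : 'M[K]_q) j :
  mxpow (kron (1%:M : 'M[K]_m) M) j = kron 1%:M (mxpow M j).
Proof. by elim: j => [|j IH]; rewrite ?kron1 // !mxpowS IH mul_kron mul1mx. Qed.

Section ProjectiveCommutation.
Variables (K : fieldType) (m : nat).
Implicit Types (c : K) (A M X Y d : 'M[K]_m) (S H : 'M[K]_m -> Prop).

Definition pcomm X d := exists c : K, c != 0 /\ X *m d = c *: (d *m X).

Lemma commZ_sym X d c : c != 0 -> X *m d = c *: (d *m X) -> d *m X = c^-1 *: (X *m d).
Proof. by move=> c0 ->; rewrite scalerA mulVf // scale1r. Qed.

Lemma pcomm_sym X d : pcomm X d -> pcomm d X.
Proof.
by case=> c [c0 /(commZ_sym c0) dX]; exists c^-1; rewrite invr_eq0.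
Qed.

Lemma mulmx_commZ X Y d c c' : X *m d = c *: (d *m X) -> Y *m d = c' *: (d *m Y) ->
  (X *m Y) *m d = (c * c') *: (d *m (X *m Y)).
Proof.
move=> Xd Yd; rewrite -mulmxA Yd -scalemxAr (mulmxA X d) Xd -scalemxAl.
by rewrite scalerA mulrC !mulmxA.
Qed.

Lemma invmx_commZ X d c : X \in unitmx -> c != 0 ->
  X *m d = c *: (d *m X) -> invmx X *m d = c^-1 *: (d *m invmx X).
Proof.
move=> uX c0 /(commZ_sym c0) dX.
rewrite -[invmx X *m d](mulmxK uX) -(mulmxA (invmx X)) dX -scalemxAr -scalemxAl.
by rewrite mulKmx.
Qed.

Lemma pcent_mul S X Y : pcent S X -> pcent S Y -> pcent S (X *m Y).
Proof.
move=> [uX hX] [uY hY]; split=> [|d Sd]; first by rewrite unitmx_mul uX.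
have [c [c0 Xd]] := hX d Sd; have [c' [c'0 Yd]] := hY d Sd.
by exists (c * c'); rewrite mulf_neq0 // (mulmx_commZ Xd Yd).
Qed.

Lemma GLsubgroup_pcent S : GLsubgroup (pcent S).
Proof.
split; [|exact: pcent_mul|].
- split=> [|d _]; first exact: unitmx1.
  by exists 1; rewrite oner_eq0 scale1r mul1mx mulmx1.
- move=> X [uX hX]; split=> //; split=> [|d Sd]; first by rewrite unitmx_inv.
  have [c [c0 Xd]] := hX d Sd.
  by exists c^-1; rewrite invr_eq0 c0 (invmx_commZ uX c0 Xd).
Qed.

Lemma GLsubgroup_mxpow H M j : GLsubgroup H -> H M -> H (mxpow M j).
Proof. by move=> [H1 HM _] HMx; elim: j => [|j IH] //=; apply: HM. Qed.

Lemma scalar_unitmx c : c != 0 -> (c%:M : 'M[K]_m) \in unitmx.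
Proof. by move=> c0; rewrite unitmxE det_scalar unitfE expf_neq0. Qed.

Lemma pcent_scalar S X : is_scalar_unit X -> pcent S X.
Proof.
case=> c [c0 ->]; split=> [|d _]; first exact: scalar_unitmx.
by exists 1; rewrite oner_eq0 scale1r scalar_mxC.
Qed.

Lemma gen_base S X : S X -> gen S X.
Proof. by move=> SX H _; apply. Qed.

Lemma gen1 S : gen S 1%:M.
Proof. by move=> H []. Qed.

Lemma gen_mul S X Y : gen S X -> gen S Y -> gen S (X *m Y).
Proof.
by move=> gX gY H gH HS; case: (gH) => _ HM _; apply: HM; [apply: gX | apply: gY].
Qed.

Lemma gen_inv S X : gen S X -> gen S (invmx X).
Proof. by move=> gX H gH HS; case: (gH) => _ _ /(_ X (gX H gH HS)) []. Qed.

Lemma gen_mxpow S M j : gen S M -> gen S (mxpow M j).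
Proof. by move=> gM; elim: j => [|j IH]; [apply: gen1 | apply: gen_mul]. Qed.

Lemma gen_trans S S' X : (forall Y, S Y -> gen S' Y) -> gen S X -> gen S' X.
Proof. by move=> SS' gX H gH HS'; apply: gX => // Y /SS'; apply. Qed.

Lemma pgen_min H S X : GLsubgroup H -> (forall Y, is_scalar_unit Y -> H Y) ->
  (forall Y, S Y -> H Y) -> pgen S X -> H X.
Proof. by move=> gH Hscalar HS; apply=> // Y [/HS|/Hscalar]. Qed.

Lemma pcent_pgen S X : (forall d, S d -> d \in unitmx) -> pcent (pgen S) X <-> pcent S X.
Proof.
move=> Sunit; split=> -[uX hX]; split=> // d.
  by move=> Sd; apply: hX; apply: gen_base; left.
suff CX : pgen S d -> pcent (eq X) d by move=> /CX [_ /(_ X erefl) /pcomm_sym].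
apply: pgen_min => [|Y|Y SY]; first exact: GLsubgroup_pcent; first exact: pcent_scalar.
by split=> [|_ <-]; [apply: Sunit | apply/pcomm_sym/hX].
Qed.

End ProjectiveCommutation.

Lemma unitmx_neq0 (K : fieldType) m (A : 'M[K]_m) : (0 < m)%N -> A \in unitmx -> A != 0.
Proof. by case: m A => // m A _; apply: contraTneq => ->; rewrite unitmxE det0 unitr0. Qed.

Lemma scalemx_unit_eq1 (K : fieldType) m (M : 'M[K]_m) c :
  (0 < m)%N -> M \in unitmx -> c *: M = M -> c = 1.
Proof.
move=> m_gt0 uM /eqP; rewrite -subr_eq0 -{2}[M]scale1r -scalerBl scaler_eq0 subr_eq0.
by rewrite (negbTE (unitmx_neq0 m_gt0 uM)) orbF => /eqP.
Qed.

Section ZariskiClosed.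
Variables (K : fieldType) (m : nat).

Lemma PZclosed_kernel (L : 'M[K]_m -> 'M[K]_m) : linear L -> PZclosed (fun A => L A = 0).
Proof.
move=> linL.
pose L' : {linear 'M[K]_m -> 'M[K]_m} := HB.pack L (GRing.isLinear.Build _ _ _ _ L linL).
split=> [|A c _ _ LA]; last by rewrite -[L _]/(L' _) linearZ /= LA scaler0.
pose S q := exists i j, q = \sum_(l < m * m) L (vec_mx (delta_mx 0 l)) i j *: 'X_l.
exists S => A _.
have evalS i j :
    (\sum_(l < m * m) L (vec_mx (delta_mx 0 l)) i j *: 'X_l).@[fun l => mxvec A 0 l] = L A i j.
  have eA : A = \sum_(l < m * m) mxvec A 0 l *: vec_mx (delta_mx 0 l).
    rewrite -{1}(mxvecK A) {1}(row_sum_delta (mxvec A)) linear_sum.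
    by apply: eq_bigr => l _; rewrite linearZ.
  rewrite raddf_sum /= -[L A]/(L' A) [X in L' X]eA linear_sum summxE.
  apply: eq_bigr => l _.
  by rewrite linearZ /= mevalXU -[L (_ *: _)]/(L' _) linearZ mxE mulrC.
split=> [LA q [i [j ->]]|S0]; first by rewrite evalS LA mxE.
by apply/matrixP => i j; rewrite mxE -evalS; apply: S0; exists i, j.
Qed.

End ZariskiClosed.

Section ConnectedCommutation.
Variables (K : fieldType) (m p : nat) (h : 'M[K]_m).
Hypotheses (m_gt0 : (0 < m)%N) (p_prime : prime p) (p_neq0 : p%:R != 0 :> K).
Hypotheses (h_unit : h \in unitmx) (h_pow : is_scalar_unit (mxpow h p)).
Let p_gt0 := prime_gt0 p_prime.

Lemma commZ_root X c : X \in unitmx -> X *m h = c *: (h *m X) -> c ^+ p = 1.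
Proof.
move=> uX /(mulmx_mxpow_commZ p); case: h_pow => l [l0 ->].
rewrite mul_mx_scalar mul_scalar_mx => /esym; apply: scalemx_unit_eq1 => //.
by rewrite unitmxZ ?unitfE.
Qed.

Definition conj_sum (A : 'M[K]_m) := \sum_(j < p) mxpow h (p.-1 - j) *m A *m mxpow h j.

Lemma conj_sumE A c : A *m h = c *: (h *m A) ->
  conj_sum A = (\sum_(j < p) c ^+ j) *: (mxpow h p.-1 *m A).
Proof.
move=> Ah; rewrite scaler_suml; apply: eq_bigr => j _.
rewrite -mulmxA (mulmx_mxpow_commZ j Ah) -scalemxAr mulmxA mxpowD subnK //.
by rewrite -ltnS prednK.
Qed.

(* For [A] twisting [h] by a p-th root of unity [c], the closed conditions
   [A *m h = h *m A] and [conj_sum A = 0] hold exactly when [c = 1], resp. [c != 1]. *)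
Lemma Pconnected_commute (Z : 'M[K]_m -> Prop) :
  (forall A, Z A -> A \in unitmx /\ pcomm A h) -> Z 1%:M -> Pconnected Z ->
  forall X, Z X -> X *m h = h *m X.
Proof.
move=> Zh Z1 Zconn X ZX.
have closed1 : PZclosed (fun A => A *m h - h *m A = 0).
  apply: PZclosed_kernel => c A B.
  by rewrite mulmxDl mulmxDr -scalemxAl -scalemxAr scalerBr addrACA opprD.
have closed2 : PZclosed (fun A => conj_sum A = 0).
  apply: PZclosed_kernel => c A B; rewrite /conj_sum scaler_sumr -big_split /=.
  by apply: eq_bigr => j _; rewrite mulmxDr mulmxDl -scalemxAr -scalemxAl.
have conj_sum_neq0 A : A \in unitmx -> A *m h - h *m A = 0 -> conj_sum A != 0.
  move=> uA /eqP; rewrite subr_eq0 => /eqP Ah.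
  rewrite (conj_sumE (c := 1)) ?scale1r // (eq_bigr (fun=> 1)) => [|j _]; last exact: expr1n.
  rewrite sumr_const card_ord scaler_nat -scaler_nat scaler_eq0 negb_or p_neq0.
  by rewrite unitmx_neq0 // unitmx_mul uA mxpow_unit.
case: (Zconn _ _ closed1 closed2).
- move=> A /Zh [uA [c [c0 Ah]]]; have [c1|c1] := eqVneq c 1.
    by left; rewrite Ah c1 scale1r subrr.
  right; rewrite (conj_sumE Ah).
  have : (c - 1) * \sum_(j < p) c ^+ j = 0 by rewrite -subrX1 (commZ_root uA Ah) subrr.
  by move/eqP; rewrite mulf_eq0 subr_eq0 (negbTE c1) => /eqP ->; rewrite scale0r.
- by move=> A /Zh [uA _] hA; move: (conj_sum_neq0 A uA hA) => /eqP.
- by move=> ZF1; apply/eqP; rewrite -subr_eq0; apply/eqP/ZF1.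
- move=> ZF2; have := conj_sum_neq0 _ (unitmx1 _ _).
  by rewrite mul1mx mulmx1 subrr ZF2 // eqxx => /(_ erefl).
Qed.

End ConnectedCommutation.

Section Lines.
Variables (K : closedFieldType) (m : nat).
Implicit Types (U V M : 'M[K]_m) (Z : 'M[K]_m -> Prop).

Definition mxline U V M := exists t : K, M = U + t *: V /\ M \in unitmx.

Definition saturation Z M := exists c A, [/\ c != 0, Z A & M = c *: A].

Definition line_poly U V (q : {mpoly K[m * m]}) : {poly K} :=
  mmap polyC (fun l => (mxvec U 0 l)%:P + (mxvec V 0 l)%:P * 'X) q.

Lemma horner_line_poly U V q t :
  (line_poly U V q).[t] = q.@[fun l => mxvec (U + t *: V) 0 l].
Proof.
rewrite mevalE /line_poly /mmap horner_sum; apply: eq_bigr => mm _.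
rewrite hornerM hornerC horner_prod; congr (_ * _); apply: eq_bigr => i _.
by rewrite horner_exp hornerD hornerC hornerMX hornerC linearD linearZ /= !mxE mulrC.
Qed.

Definition line_det U V : {poly K} :=
  \det (\matrix_(i, j) ((U i j)%:P + (V i j)%:P * 'X)).

Lemma horner_line_det U V t : (line_det U V).[t] = \det (U + t *: V).
Proof.
rewrite -[_.[t]]/(horner_eval t _) -det_map_mx; congr (\det _).
by apply/matrixP => i j; rewrite !mxE /= horner_evalE hornerD hornerC hornerMX hornerC mulrC.
Qed.

Lemma line_det_neq0 U V : U \in unitmx -> line_det U V != 0.
Proof.
apply: contraTneq => d0.
by rewrite unitmxE -[U]addr0 -(scale0r V) -horner_line_det d0 horner0 unitr0.
Qed.

(* A closed set either contains the whole line or meets it in the roots of a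
   nonzero polynomial, while the line has infinitely many invertible points. *)
Lemma Pconnected_mxline U V : U \in unitmx -> Pconnected (mxline U V).
Proof.
move=> uU F1 F2 [[S1 F1E] _] [[S2 F2E] _] cover _.
have line_unit t : (line_det U V).[t] != 0 -> mxline U V (U + t *: V).
  by rewrite horner_line_det => dt; exists t; rewrite unitmxE unitfE.
have dichotomy S F :
    (forall A, A \in unitmx -> F A <-> forall q, S q -> q.@[fun i => mxvec A 0 i] = 0) ->
    (forall M, mxline U V M -> F M) \/ exists2 q, S q & line_poly U V q != 0.
  move=> FE; have [[q [Sq nq]]|all0] := classic (exists q, S q /\ line_poly U V q != 0).
    by right; exists q.
  left=> _ [t [-> ut]]; apply/FE => // q Sq; rewrite -horner_line_poly.
  have [->|nq] := eqVneq (line_poly U V q) 0; first by rewrite horner0.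
  by case: all0; exists q.
have [?|[q1 S1q1 nq1]] := dichotomy _ _ F1E; first by left.
have [?|[q2 S2q2 nq2]] := dichotomy _ _ F2E; first by right.
have /closed_nonrootP [t] : line_poly U V q1 * line_poly U V q2 * line_det U V != 0.
  by rewrite !mulf_neq0 // line_det_neq0.
rewrite /root !hornerM !mulf_eq0 !negb_or => /andP [/andP [n1 n2] /line_unit Lt].
have ut : U + t *: V \in unitmx by case: Lt => s [_].
case: (cover _ Lt) => [/(F1E _ ut) /(_ q1 S1q1) | /(F2E _ ut) /(_ q2 S2q2)].
  by move: n1; rewrite horner_line_poly => /eqP.
by move: n2; rewrite horner_line_poly => /eqP.
Qed.

Lemma saturated_saturation Z : saturated (saturation Z).
Proof.
move=> _ c _ c0 [c' [A [c'0 ZA ->]]].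
by exists (c * c'), A; rewrite scalerA mulf_neq0.
Qed.

Lemma Pconnected_saturation Z : (forall A, Z A -> A \in unitmx) ->
  Pconnected Z -> Pconnected (saturation Z).
Proof.
move=> Zunit Zconn F1 F2 F1c F2c cover disj.
have sat_Z A : Z A -> saturation Z A by exists 1, A; rewrite oner_eq0 scale1r.
have [ZF|ZF] := Zconn F1 F2 F1c F2c (fun A ZA => cover A (sat_Z A ZA))
  (fun A ZA => disj A (sat_Z A ZA)); [left | right] => _ [c [A [c0 ZA ->]]].
  by apply: F1c.2 => //; [apply: Zunit | apply: ZF].
by apply: F2c.2 => //; [apply: Zunit | apply: ZF].
Qed.

Lemma idcomp_mxline C Y : Y \in unitmx ->
  (forall M, saturation (mxline 1%:M (Y - 1%:M)) M -> C M) -> idcomp C Y.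
Proof.
move=> uY lineC; exists (saturation (mxline 1%:M (Y - 1%:M))); split=> //.
- exact: saturated_saturation.
- exists 1, 1%:M; rewrite oner_eq0 scale1r; split=> //.
  by exists 0; rewrite scale0r addr0 unitmx1.
- by apply: Pconnected_saturation; [move=> A [t []] | apply/Pconnected_mxline/unitmx1].
- exists 1, Y; rewrite oner_eq0 scale1r; split=> //.
  by exists 1; rewrite scale1r addrC subrK.
Qed.

End Lines.

Section SigmaArithmetic.
Variables (p s' : nat).
Hypothesis p_gt0 : (0 < p)%N.
Local Notation P := (p ^ s')%N.
Local Notation P1 := (p ^ s'.+1)%N.

Let P1_gt0 : (0 < P1)%N. Proof. by rewrite expn_gt0 p_gt0. Qed.

Let P1_split : P1 = ((p - 1) * P + P)%N.
Proof. by rewrite expnS -[X in _ = (_ + X)%N]mul1n -mulnDl subnK. Qed.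

(* [sigma p s'] increments the [s']-th base-[p] digit modulo [p]; [e] is the
   carry that is dropped. *)
Lemma sigma_carry i : exists2 e, (e <= 1)%N & (sigma p s' i + e * P1 = i + P)%N.
Proof.
have := leq_mod i P1; have := P1_split; rewrite /sigma.
case: ifP => [_|/negbT]; first by exists 0%N; rewrite ?mul0n ?addn0.
by rewrite -leqNgt; exists 1%N => //; lia.
Qed.

Lemma sigma_divn i : (sigma p s' i %/ P1 = i %/ P1)%N.
Proof.
have := ltn_pmod i P1_gt0; have := P1_split; have := divn_eq i P1; rewrite /sigma.
move: (i %/ P1)%N (i %% P1)%N => a w -> split_P1 lt_w.
have block v : (v < P1)%N -> ((a * P1 + v) %/ P1)%N = a.
  by move=> ?; rewrite divnMDl ?P1_gt0 // divn_small ?addn0.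
move: ((p - 1) * P)%N split_P1 => c split_P1.
case: ifP => [test|/negbT]; first by rewrite -addnA block //; lia.
by rewrite -leqNgt => test; rewrite -addnBA ?block //; lia.
Qed.

Lemma sigma_inj : injective (sigma p s').
Proof.
move=> i j sij; have := sigma_divn i; rewrite sij sigma_divn => ij_div.
have [ei ei1 ri] := sigma_carry i; have [ej ej1 rj] := sigma_carry j.
have := ltn_pmod i P1_gt0; have := ltn_pmod j P1_gt0.
move: (divn_eq i P1) (divn_eq j P1) ri rj; rewrite sij ij_div.
move: (sigma p s' j) (j %/ P1 * P1)%N (i %% P1)%N (j %% P1)%N => x b u v.
by case: ei ei1 => [|[|]] // _; case: ej ej1 => [|[|]] // _; lia.
Qed.

Lemma sigma_lt r i : (s' < r)%N -> (i < p ^ r)%N -> (sigma p s' i < p ^ r)%N.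
Proof.
move=> lt_s'r; rewrite -(subnKC lt_s'r) expnD mulnC -!ltn_divLR ?P1_gt0 //.
by rewrite sigma_divn.
Qed.

Lemma expr_divn_sigma (K : fieldType) (beta : K) s'' i : p.-primitive_root beta ->
  beta ^+ (sigma p s' i %/ p ^ s'') =
  (if s'' == s' then beta else 1) * beta ^+ (i %/ p ^ s'').
Proof.
move=> prim; have [lt_s's''|le_s''s'] := ltnP s' s''.
  rewrite gtn_eqF // mul1r -(subnKC lt_s's'') expnD !divnMA; congr (beta ^+ (_ %/ _)).
  exact: sigma_divn.
have [d sE] : exists d, s' = (d + s'')%N by exists (s' - s'')%N; rewrite subnK.
have [e _ /(congr1 (fun n => beta ^+ (n %/ p ^ s'')))] := sigma_carry i.
rewrite sE expnS expnD !mulnA !divnDMl ?expn_gt0 ?p_gt0 // !exprD.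
rewrite [(e * p)%N]mulnC -mulnA exprM (prim_expr_order prim) expr1n mulr1 => ->.
rewrite mulrC; congr (_ * _); case: d {sE} => [|d]; first by rewrite add0n eqxx expr1.
by rewrite -{1}[s'']add0n eqn_add2r expnS exprM (prim_expr_order prim) expr1n.
Qed.

End SigmaArithmetic.

Lemma Bmat_unit (K : fieldType) p r s' :
  (0 < p)%N -> (s' < r)%N -> Bmat K p r s' \in unitmx.
Proof.
move=> p_gt0 lt_s'r.
pose f (i : 'I_(p ^ r)) := Ordinal (sigma_lt p_gt0 lt_s'r (ltn_ord i)).
have f_inj : injective f by move=> i j [] /sigma_inj /val_inj; apply.
suff -> : Bmat K p r s' = perm_mx (perm f_inj) by apply: unitmx_perm.
by apply/matrixP => i j; rewrite !mxE permE.
Qed.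

Section SigmaMatrices.
Variables (K : fieldType) (p r : nat) (beta : K).
Hypothesis prim : p.-primitive_root beta.
Local Notation q := (p ^ r)%N.
Let p_gt0 := prim_order_gt0 prim.

Lemma Amat_diag s' : Amat p r beta s' = diag_mx (\row_(i < q) beta ^+ (i %/ p ^ s')).
Proof.
by apply/matrixP => i j; rewrite !mxE; case: eqVneq => [->|]; rewrite ?mulr1n ?mulr0n.
Qed.

Lemma Bmat_Amat s' s'' :
  Bmat K p r s' *m Amat p r beta s'' =
  (if s'' == s' then beta else 1) *: (Amat p r beta s'' *m Bmat K p r s').
Proof.
rewrite Amat_diag mul_mx_diag mul_diag_mx; apply/matrixP => i j; rewrite !mxE.
have [<-|] := eqVneq (sigma p s' i) j; last by rewrite !mulr0n mul0r !mulr0.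
by rewrite (expr_divn_sigma _ _ _ _ prim) ?mul1r ?mulr1.
Qed.

Lemma mxpow_Amat s' : mxpow (Amat p r beta s') p = 1%:M.
Proof.
rewrite Amat_diag mxpow_diag -diag_const_mx; congr diag_mx; apply/rowP => i.
by rewrite !mxE exprAC (prim_expr_order prim) expr1n.
Qed.

Lemma Amat_unit s' : Amat p r beta s' \in unitmx.
Proof. by have := mxpow_Amat s'; rewrite -(prednK p_gt0) mxpowS => /mulmx1_unit []. Qed.

Lemma eq_digits n i j : (i < p ^ n)%N -> (j < p ^ n)%N ->
  (forall s', (s' < n)%N -> beta ^+ (i %/ p ^ s') = beta ^+ (j %/ p ^ s')) -> i = j.
Proof.
elim: n i j => [|n IH] i j; first by rewrite expn0 !ltnS !leqn0 => /eqP -> /eqP ->.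
move=> lt_i lt_j eq_pow; rewrite (divn_eq i p) (divn_eq j p).
have /eqP -> : (i %% p == j %% p)%N.
  have := eq_pow 0%N isT; rewrite !expn0 !divn1 => /eqP.
  by rewrite (eq_prim_root_expr prim).
congr (_ * _ + _)%N; apply: IH; rewrite ?ltn_divLR -?expnSr //.
by move=> s' lt_s'n; rewrite -!divnMA -expnS; apply: eq_pow.
Qed.

End SigmaMatrices.

Section DiagonalBlocks.
Variables (K : fieldType) (k q : nat).
Implicit Types (M N : 'M[K]_(k * q)) (h : 'M[K]_k) (b : 'I_q).

Definition block_diagonal M := forall a b a' b', b != b' ->
  M (mxtens_index (a, b)) (mxtens_index (a', b')) = 0.

Definition diag_block M b : 'M[K]_k :=
  \matrix_(a, a') M (mxtens_index (a, b)) (mxtens_index (a', b)).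

Lemma sum_mxtens_index (F : 'I_(k * q) -> K) :
  \sum_l F l = \sum_(a < k) \sum_(b < q) F (mxtens_index (a, b)).
Proof.
rewrite (reindex (@mxtens_index k q)) /=; last first.
  by exists (@mxtens_unindex k q) => l _; rewrite (mxtens_indexK, mxtens_unindexK).
by rewrite pair_big; apply: eq_bigr => -[].
Qed.

Lemma block_diagonal_kron h : block_diagonal (kron h 1%:M).
Proof. by move=> a b a' b' nb; rewrite kron_tensmx tensmxE mxE (negbTE nb) mulr0. Qed.

Lemma diag_block_kron h b : diag_block (kron h 1%:M) b = h.
Proof. by apply/matrixP => a a'; rewrite mxE kron_tensmx tensmxE mxE eqxx mulr1. Qed.

Lemma diag_block_mul M N b : block_diagonal M ->
  diag_block (M *m N) b = diag_block M b *m diag_block N b.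
Proof.
move=> Mdiag; apply/matrixP => a a''; rewrite !mxE sum_mxtens_index.
apply: eq_bigr => a' _; rewrite (bigD1 b) //= big1 ?addr0 ?mxE // => b' nb.
by rewrite Mdiag ?mul0r // eq_sym.
Qed.

Lemma diag_blockZ c M b : diag_block (c *: M) b = c *: diag_block M b.
Proof. by apply/matrixP => a a'; rewrite !mxE. Qed.

Lemma diag_block_unit M b : M \in unitmx -> block_diagonal M -> diag_block M b \in unitmx.
Proof.
move=> uM Mdiag; suff : diag_block M b *m diag_block (invmx M) b = 1%:M by case/mulmx1_unit.
by rewrite -diag_block_mul // mulmxV // -(kron1 K k q) diag_block_kron.
Qed.

End DiagonalBlocks.

Section KroneckerDigits.
Variables (K : fieldType) (p r k : nat) (beta : K).
Hypothesis prim : p.-primitive_root beta.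
Local Notation A s' := (kron (1%:M : 'M[K]_k) (Amat p r beta s')).

Lemma kron1_Amat_diag s' :
  A s' = diag_mx (\row_l beta ^+ ((mxtens_unindex l).2 %/ p ^ s')).
Proof.
rewrite kron_tensmx Amat_diag; apply/matrixP => i j.
case: (mxtens_indexP i) => a b; case: (mxtens_indexP j) => a' b'.
rewrite tensmxE !mxE mxtens_indexK (inj_eq (can_inj (@mxtens_indexK k (p ^ r)))).
by rewrite xpair_eqE /=; case: eqP; case: eqP; rewrite ?mul1r ?mul0r ?mulr0n.
Qed.

(* On the [b]-th diagonal block [A s'] is the scalar [beta ^+ (b %/ p ^ s')];
   these scalars determine [b]. *)
Lemma block_diagonal_Amat_comm Y :
  (forall s', (s' < r)%N -> Y *m A s' = A s' *m Y) -> block_diagonal Y.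
Proof.
move=> YA a b a' b' nb; apply/eqP; apply: contraR nb => Yab; apply/eqP/val_inj.
apply: (eq_digits prim (ltn_ord b) (ltn_ord b')) => s' lt_s'r.
have /matrixP /(_ (mxtens_index (a, b)) (mxtens_index (a', b'))) := YA s' lt_s'r.
rewrite kron1_Amat_diag mul_mx_diag mul_diag_mx !mxE !mxtens_indexK /= mulrC => /eqP.
by rewrite -subr_eq0 -mulrBl mulf_eq0 (negbTE Yab) orbF subr_eq0 => /eqP.
Qed.

End KroneckerDigits.

Section Centralizer.
Variables (K : closedFieldType) (p r k : nat) (beta : K) (H : 'M[K]_k -> Prop).
Hypotheses (p_prime : prime p) (p_neq0 : p%:R != 0 :> K) (prim : p.-primitive_root beta).
Hypothesis k_gt0 : (0 < k)%N.
Hypothesis H_cases : trivialP H \/ (toral_elab_psubgroup p H /\ connected_centralizer H).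
Local Notation q := (p ^ r)%N.
Local Notation A s' := (kron (1%:M : 'M[K]_k) (Amat p r beta s')).
Local Notation B s' := (kron (1%:M : 'M[K]_k) (Bmat K p r s')).

Definition Dgen (X : 'M[K]_(k * q)) :=
  (exists s', (s' < r)%N /\ X = A s') \/ (exists h, H h /\ X = kron h 1%:M).

Definition Bgen (X : 'M[K]_(k * q)) := exists s', (s' < r)%N /\ X = B s'.

Local Notation C := (pcent (pgen Dgen)).

Lemma kq_gt0 : (0 < k * q)%N.
Proof. by rewrite muln_gt0 k_gt0 expn_gt0 prime_gt0. Qed.

Lemma H_unit h : H h -> h \in unitmx.
Proof.
case: H_cases => [Htriv /Htriv [c [c0 ->]]|[[[[_ _ Hinv] _] _ _ _] _] /Hinv []] //.
exact: scalar_unitmx.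
Qed.

Lemma Dgen_unit d : Dgen d -> d \in unitmx.
Proof.
case=> [[s' [_ ->]]|[h [Hh ->]]]; apply: kron_unitmx; rewrite ?unitmx1 //.
  exact: Amat_unit prim _.
exact: H_unit.
Qed.

Lemma pcent_Dgen X : C X <-> pcent Dgen X.
Proof. exact: pcent_pgen Dgen_unit. Qed.

Lemma kron1_Bmat_Amat s' s'' :
  B s' *m A s'' = (if s'' == s' then beta else 1) *: (A s'' *m B s').
Proof. by rewrite !mul_kron !mul1mx (Bmat_Amat _ prim) kronZr. Qed.

Lemma Bgen_pcent X : Bgen X -> C X.
Proof.
case=> s' [lt_s'r ->]; apply/pcent_Dgen; split.
  by apply: kron_unitmx; rewrite ?unitmx1 ?Bmat_unit ?prime_gt0.
move=> _ [[s'' [_ ->]]|[h [_ ->]]]; last first.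
  by exists 1; rewrite oner_eq0 scale1r !mul_kron !mul1mx !mulmx1.
exists (if s'' == s' then beta else 1); rewrite kron1_Bmat_Amat; split=> [|//].
by case: (s'' =P s') => _; rewrite ?oner_neq0 // (prim_root_eq0 prim) -lt0n prime_gt0.
Qed.

Lemma pgen_Bgen_pcent b : pgen Bgen b -> C b.
Proof.
by apply: pgen_min; [exact: GLsubgroup_pcent | exact: pcent_scalar | exact: Bgen_pcent].
Qed.

(* [B s'] twists [A s'] by [beta] and commutes with the other [A]'s, so a
   suitable power of [B n] removes the twist of [X] against [A n]. *)
Lemma pcent_normalize n : (n <= r)%N -> forall X, C X ->
  (forall s', (n <= s' < r)%N -> X *m A s' = A s' *m X) ->
  exists2 b, pgen Bgen b & forall s', (s' < r)%N -> X *m b *m A s' = A s' *m (X *m b).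
Proof.
elim: n => [_ X _ XA|n IH lt_nr X CX XA].
  by exists 1%:M; [apply: gen1 | move=> s' lt_s'r; rewrite mulmx1 XA].
have [uX /(_ (A n)) [|c [c0 XAn]]] := proj1 (pcent_Dgen X) CX; first by left; exists n.
have Anp : is_scalar_unit (mxpow (A n) p).
  by rewrite mxpow_kron1 (mxpow_Amat _ prim) kron1; exists 1; rewrite oner_eq0.
have /(prim_rootP prim) [e ce] := commZ_root kq_gt0 Anp uX XAn.
pose W := X *m mxpow (B n) (p - e).
have CW : C W.
  apply: pcent_mul => //; apply: GLsubgroup_mxpow; first exact: GLsubgroup_pcent.
  by apply: Bgen_pcent; exists n.
have WA s' : (n <= s' < r)%N -> W *m A s' = A s' *m W.
  case/andP=> le_ns' lt_s'r.
  rewrite -mulmxA (mxpow_mulmx_commZ _ (kron1_Bmat_Amat n s')) -scalemxAr mulmxA.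
  have [->|ne] := eqVneq s' n.
    rewrite XAn ce -scalemxAl scalerA -exprD subnK ?(ltnW (ltn_ord e)) //.
    by rewrite (prim_expr_order prim) scale1r mulmxA.
  by rewrite expr1n scale1r XA ?mulmxA // ltn_neqAle eq_sym ne le_ns'.
have [b Bb Wb] := IH (ltnW lt_nr) W CW WA.
exists (mxpow (B n) (p - e) *m b); last by move=> s' /Wb; rewrite !mulmxA.
by apply: gen_mul => //; apply: gen_mxpow; apply: gen_base; left; exists n.
Qed.

Lemma pcent_Amat_commute_H Y : C Y -> (forall s', (s' < r)%N -> Y *m A s' = A s' *m Y) ->
  forall h, H h -> Y *m kron h 1%:M = kron h 1%:M *m Y.
Proof.
move=> /pcent_Dgen [uY YD] YA h Hh.
have [chi [_ Yh]] : pcomm Y (kron h 1%:M) by apply: YD; right; exists h.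
case: H_cases => [Htriv|[[_ _ Hpow _] Hconn]].
  have [c [_ ->]] := (Htriv h).1 Hh.
  by rewrite -[c%:M]scalemx1 kronZl kron1 scalemx1 scalar_mxC.
have Ydiag := block_diagonal_Amat_comm prim YA.
have q_gt0 : (0 < q)%N by rewrite expn_gt0 prime_gt0.
pose x := diag_block Y (Ordinal q_gt0).
have xH h' c :
    Y *m kron h' 1%:M = c *: (kron h' 1%:M *m Y) -> x *m h' = c *: (h' *m x).
  move=> /(congr1 (fun M => diag_block M (Ordinal q_gt0))).
  by rewrite diag_blockZ !diag_block_mul ?diag_block_kron //; apply: block_diagonal_kron.
have Cx : pcent H x.
  split=> [|h' Hh']; first exact: diag_block_unit.
  have [c [c0 /xH xh']] : pcomm Y (kron h' 1%:M) by apply: YD; right; exists h'.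
  by exists c.
have [Z [ZC _ Z1 Zconn Zx]] := Hconn x Cx.
have ZH A' : Z A' -> A' \in unitmx /\ pcomm A' h by move=> /ZC [uA' /(_ h Hh)].
have xh := Pconnected_commute k_gt0 p_prime p_neq0 (H_unit Hh) (Hpow h Hh) ZH Z1 Zconn Zx.
have chi1 : chi = 1.
  apply: (scalemx_unit_eq1 k_gt0 (M := h *m x)); last by rewrite -(xH _ _ Yh) xh.
  by rewrite unitmx_mul H_unit //; apply: diag_block_unit.
by rewrite Yh chi1 scale1r.
Qed.

Lemma commute_Dgen_idcomp Y : Y \in unitmx ->
  (forall d, Dgen d -> Y *m d = d *m Y) -> idcomp C Y.
Proof.
move=> uY YD; apply: idcomp_mxline => // _ [c [M [c0 [t [-> uM]] ->]]].
apply/pcent_Dgen; split=> [|d Dd]; first by rewrite unitmxZ ?unitfE.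
exists 1; rewrite oner_eq0 scale1r; split=> //.
rewrite -scalemxAl -scalemxAr mulmxDl mulmxDr -scalemxAl -scalemxAr.
by rewrite mulmxBl mulmxBr YD // mul1mx mulmx1.
Qed.

Lemma pcent_decomposition X :
  C X -> exists Y b, [/\ idcomp C Y, pgen Bgen b & X = Y *m b].
Proof.
move=> CX; have [|b Bb XbA] := pcent_normalize (leqnn r) CX.
  by move=> s'; rewrite ltnNge andbN.
have Cb := pgen_Bgen_pcent Bb; have CXb := pcent_mul CX Cb.
exists (X *m b), (invmx b); split; last by rewrite mulmxK //; case: Cb.
- apply: commute_Dgen_idcomp => [|_ [[s' [lt_s'r ->]]|[h [Hh ->]]]]; first by case: CXb.
    exact: XbA.
  exact: pcent_Amat_commute_H.
- exact: gen_inv.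
Qed.

End Centralizer.

Theorem theorem4p28 (K : closedFieldType) (p s t r k : nat) (beta : K)
  (H : 'M[K]_k -> Prop) :
  prime p -> odd p -> p \notin [pchar K] -> p.-primitive_root beta ->
  (1 <= s)%N -> (1 <= t)%N -> coprime p t ->
  (1 <= r <= s)%N -> (k * p ^ r = p ^ s * t)%N ->
  (trivialP H \/ (toral_elab_psubgroup p H /\ connected_centralizer H)) ->
  let Dgen := fun X : 'M[K]_(k * p ^ r) =>
    (exists s', (s' < r)%N /\ X = kron 1%:M (@Amat K p r beta s')) \/
    (exists h, H h /\ X = kron h 1%:M) in
  let C := pcent (pgen Dgen) in
  let C0 := idcomp C in
  let Bgen := fun X : 'M[K]_(k * p ^ r) =>
    exists s', (s' < r)%N /\ X = kron 1%:M (@Bmat K p r s') in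
  (forall X, C X <-> pgen (fun Y => C0 Y \/ Bgen Y) X) /\
  (forall X, C X <-> exists c b, [/\ C0 c, pgen Bgen b & X = c *m b]).
Proof.
(* The decomposition holds for any [r] and [k > 0]. *)
move=> p_prime _ p_nchar prim _ t_gt0 _ _ kE H_cases Dgen C C0 Bgen.
have : (0 < k * p ^ r)%N by rewrite kE muln_gt0 expn_gt0 prime_gt0.
rewrite muln_gt0 => /andP [k_gt0 _].
have p_neq0 : p%:R != 0 :> K by move: p_nchar; rewrite inE p_prime.
have decomp := pcent_decomposition p_prime p_neq0 prim k_gt0 H_cases.
have BgenC := Bgen_pcent p_prime prim H_cases.
have pgenBC := pgen_Bgen_pcent p_prime prim H_cases.
have C0C Y : C0 Y -> C Y by case=> Z [ZC _ _ _ /ZC].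
split=> X; split.
- case/decomp=> Y [b [C0Y Bb ->]]; apply: gen_mul; first by apply: gen_base; left; left.
  by apply: gen_trans Bb => Z [BZ|sZ]; apply: gen_base; [left; right | right].
- apply: pgen_min => [|Y|Y [/C0C|/BgenC]] //; first exact: GLsubgroup_pcent.
  exact: pcent_scalar.
- by case/decomp=> Y [b [C0Y Bb ->]]; exists Y, b.
- by case=> Y [b [/C0C CY /pgenBC Cb ->]]; apply: pcent_mul.
Qed.
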